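(* In the isotropic setting below, fix $r>0$ and $F,F_p\in\mathrm{GL}^+(3)$, and let $C_p=F_p^TF_p$, $U_p=\sqrt{C_p}$. Then $$-F_p^{-1}\,\mathcal N_r(\Sigma_e)\,F_p^{-T}=-U_p^{-1}\,\mathcal N_r(\mathring\Sigma)\,U_p^{-1}.$$ Consequently, for a differentiable curve $t\mapsto F_p(t)$ at fixed $F$, the Lion flow rule $\frac{d}{dt}[C_p^{-1}]\in-F_p^{-1}\mathcal N_r(\Sigma_e)F_p^{-T}$ holds if and only if the Grandi–Stefanelli flow rule $\sqrt{C_p}\,\frac{d}{dt}[C_p^{-1}]\,\sqrt{C_p}\in-\mathcal N_r(\mathring\Sigma)$ holds; the latter depends on $C$ and $C_p$ only.
   Context: $W:\mathrm{GL}^+(3)\to\mathbb{R}$ objective and isotropic ($W(QFR)=W(F)$, $Q,R\in\mathrm{SO}(3)$), written $W(F_e)=\Psi(I_1(C_e),I_2(C_e),I_3(C_e))$ with $\Psi\in C^1$; $\widetilde W(X)=\Psi(\mathrm{tr}X,\mathrm{tr}(\mathrm{Cof}X),\det X)$. $F_e=FF_p^{-1}$, $C=F^TF$, $C_e=F_e^TF_e$. $\langle X,Y\rangle=\mathrm{tr}(XY^T)$, $\|\cdot\|$ Frobenius norm, $D$ gradient, $\mathrm{dev}_3X=X-\frac13\mathrm{tr}(X)\mathbb{1}$, $\mathrm{sym}X=\frac12(X+X^T)$. $\Sigma_e=F_e^TDW(F_e)$ (symmetric). $\mathring\Sigma:=2\,U_p^{-1}\mathrm{sym}[C\,D\widetilde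 W(CC_p^{-1})]U_p^{-1}$. For $r>0$ and symmetric $S$: $\mathcal N_r(S)=\{0\}$ if $\|\mathrm{dev}_3S\|<r$, $\{\lambda\,\mathrm{dev}_3S/\|\mathrm{dev}_3S\|:\lambda\ge0\}$ if $\|\mathrm{dev}_3S\|=r$, $\emptyset$ if $\|\mathrm{dev}_3S\|>r$ (the subdifferential of the indicator function of $\{\|\mathrm{dev}_3S\|\le r\}$). $M\mathcal AN=\{MXN:X\in\mathcal A\}$. *)

From Stdlib Require Import Reals.
Open Scope R_scope.

Inductive idx : Type := i1 | i2 | i3.

Definition Mat := idx -> idx -> R.
Definition Vec := idx -> R.

Definition sum3 (f : idx -> R) : R := f i1 + f i2 + f i3.

Definition mmul (A B : Mat) : Mat := fun i j => sum3 (fun k => A i k * B k j).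
Definition trans (A : Mat) : Mat := fun i j => A j i.
Definition madd (A B : Mat) : Mat := fun i j => A i j + B i j.
Definition mopp (A : Mat) : Mat := fun i j => - A i j.
Definition mscal (a : R) (A : Mat) : Mat := fun i j => a * A i j.
Definition mzero : Mat := fun _ _ => 0.
Definition mid : Mat := fun i j => match i, j with
  | i1, i1 | i2, i2 | i3, i3 => 1 | _, _ => 0 end.

Definition tr (A : Mat) : R := A i1 i1 + A i2 i2 + A i3 i3.

Definition det (A : Mat) : R :=
    A i1 i1 * (A i2 i2 * A i3 i3 - A i2 i3 * A i3 i2)
  - A i1 i2 * (A i2 i1 * A i3 i3 - A i2 i3 * A i3 i1)
  + A i1 i3 * (A i2 i1 * A i3 i2 - A i2 i2 * A i3 i1).

Definition nxt (i : idx) : idx := match i with i1 => i2 | i2 => i3 | i3 => i1 end.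

(* Cofactor matrix: Cof A = det(A) A^{-T} for invertible A *)
Definition cof (A : Mat) : Mat := fun i j =>
  A (nxt i) (nxt j) * A (nxt (nxt i)) (nxt (nxt j))
  - A (nxt i) (nxt (nxt j)) * A (nxt (nxt i)) (nxt j).

Definition minv (A : Mat) : Mat := mscal (/ det A) (trans (cof A)).

Definition inner (X Y : Mat) : R := tr (mmul X (trans Y)).
Definition mnorm (X : Mat) : R := sqrt (inner X X).

Definition GLplus (A : Mat) : Prop := det A > 0.
Definition symmetric (A : Mat) : Prop := trans A = A.
Definition posdef (A : Mat) : Prop :=
  forall x : Vec, (x i1 <> 0 \/ x i2 <> 0 \/ x i3 <> 0) ->
    sum3 (fun i => sum3 (fun j => x i * A i j * x j)) > 0.
Definition is_sqrt_spd (U C : Mat) : Prop :=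
  symmetric U /\ posdef U /\ mmul U U = C.

Definition dev3 (X : Mat) : Mat := madd X (mopp (mscal (tr X / 3) mid)).
Definition msym (X : Mat) : Mat := mscal (1/2) (madd X (trans X)).

Definition Ncone (r : R) (S : Mat) (X : Mat) : Prop :=
  (mnorm (dev3 S) < r /\ X = mzero) \/
  (mnorm (dev3 S) = r /\
     exists lam : R, 0 <= lam /\ X = mscal (lam / mnorm (dev3 S)) (dev3 S)).

Definition negconj (M N : Mat) (A : Mat -> Prop) (X : Mat) : Prop :=
  exists Y, A Y /\ X = mopp (mmul M (mmul Y N)).

Definition is_gradient (f : Mat -> R) (X G : Mat) : Prop :=
  forall eps, eps > 0 -> exists delta, delta > 0 /\
    forall H, mnorm H < delta ->
      Rabs (f (madd X H) - f X - inner G H) <= eps * mnorm H.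

Definition norm3 (a b c : R) : R := sqrt (a*a + b*b + c*c).
Definition cont3 (g : R -> R -> R -> R) : Prop :=
  forall x y z eps, eps > 0 -> exists delta, delta > 0 /\
    forall a b c, norm3 (a - x) (b - y) (c - z) < delta ->
      Rabs (g a b c - g x y z) < eps.
Definition C1_3 (Psi : R -> R -> R -> R) : Prop :=
  exists d1 d2 d3 : R -> R -> R -> R,
    cont3 d1 /\ cont3 d2 /\ cont3 d3 /\
    forall x y z eps, eps > 0 -> exists delta, delta > 0 /\
      forall h k l, norm3 h k l < delta ->
        Rabs (Psi (x+h) (y+k) (z+l) - Psi x y z
              - (d1 x y z * h + d2 x y z * k + d3 x y z * l)) <= eps * norm3 h k l.

Definition Wtilde (Psi : R -> R -> R -> R) (X : Mat) : R :=
  Psi (tr X) (tr (cof X)) (det X).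
Definition Wfun (Psi : R -> R -> R -> R) (Fe : Mat) : R :=
  Wtilde Psi (mmul (trans Fe) Fe).

(* Sigma_e = F_e^T DW(F_e), with Ge = DW(F_e) *)
Definition Sigma_e (Fe Ge : Mat) : Mat := mmul (trans Fe) Ge.
(* ring-Sigma = 2 Up^{-1} sym[C DW~(C Cp^{-1})] Up^{-1}, with Gt = DW~(C Cp^{-1}) *)
Definition Sigma_ring (Up C Gt : Mat) : Mat :=
  mscal 2 (mmul (minv Up) (mmul (msym (mmul C Gt)) (minv Up))).

(* W~ is invariant under similarities X |-> P X P^-1, because tr, tr Cof and det are.
   Comparing directional derivatives along X |-> (1 + sN) X (1 - sN), N nilpotent, shows
   that its gradient G at X satisfies X G^T = G^T X; and since F_e^T F_e = F_p^-T C F_p^-1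
   is similar to C C_p^-1, the chain rule expresses DW(F_e) through DW~(C C_p^-1).  With the
   polar decomposition F_p = R_p U_p this gives R_p^T Sigma_e R_p = ring-Sigma and
   F_p^-1 = U_p^-1 R_p^T, and N_r commutes with orthogonal conjugation, so the two sets
   agree.  The flow rules then differ only by conjugation with U_p. *)

From Stdlib Require Import Reals Lra FunctionalExtensionality.
Open Scope R_scope.

Lemma Mat_ext (A B : Mat) : (forall i j, A i j = B i j) -> A = B.
Proof. intro H. extensionality i. extensionality j. apply H. Qed.

Ltac mat_ring := apply Mat_ext; intros [] [];
  unfold mmul, trans, madd, mopp, mscal, mzero, mid, sum3, cof, det, tr, nxt; simpl; ring.

Infix "**" := mmul (at level 40, left associativity).

Lemma mmul_assoc A B C : A ** B ** C = A ** (B ** C). Proof. mat_ring. Qed.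
Lemma mmul_mid_l A : mid ** A = A. Proof. mat_ring. Qed.
Lemma mmul_mid_r A : A ** mid = A. Proof. mat_ring. Qed.
Lemma mmul_madd_l A B C : A ** madd B C = madd (A ** B) (A ** C). Proof. mat_ring. Qed.
Lemma mmul_madd_r A B C : madd A B ** C = madd (A ** C) (B ** C). Proof. mat_ring. Qed.
Lemma mmul_mopp_l A B : mopp A ** B = mopp (A ** B). Proof. mat_ring. Qed.
Lemma mmul_mopp_r A B : A ** mopp B = mopp (A ** B). Proof. mat_ring. Qed.
Lemma mopp_mopp A : mopp (mopp A) = A. Proof. mat_ring. Qed.
Lemma trans_mmul A B : trans (A ** B) = trans B ** trans A. Proof. mat_ring. Qed.
Lemma trans_trans A : trans (trans A) = A. Proof. mat_ring. Qed.
Lemma trans_mid : trans mid = mid. Proof. mat_ring. Qed.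
Lemma det_mid : det mid = 1. Proof. unfold det, mid; ring. Qed.
Lemma det_trans A : det (trans A) = det A. Proof. unfold det, trans; ring. Qed.
Lemma det_mmul A B : det (A ** B) = det A * det B. Proof. unfold det, mmul, sum3; ring. Qed.
Lemma cof_mmul A B : cof (A ** B) = cof A ** cof B. Proof. mat_ring. Qed.
Lemma cof_mid : cof mid = mid. Proof. mat_ring. Qed.
Lemma tr_mmulC A B : tr (A ** B) = tr (B ** A). Proof. unfold tr, mmul, sum3; ring. Qed.

Lemma mmul_cancel_l A B Z : A ** B = mid -> A ** (B ** Z) = Z.
Proof. intro H. rewrite <- mmul_assoc, H. apply mmul_mid_l. Qed.

Lemma mmul_minv A : det A <> 0 -> A ** minv A = mid.
Proof.
  intro H. apply Mat_ext; intros [] [];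
  unfold minv, mmul, trans, mscal, mid, sum3, cof, nxt; unfold det in *; simpl; field; exact H.
Qed.

Lemma minv_mmul A : det A <> 0 -> minv A ** A = mid.
Proof.
  intro H. apply Mat_ext; intros [] [];
  unfold minv, mmul, trans, mscal, mid, sum3, cof, nxt; unfold det in *; simpl; field; exact H.
Qed.

Lemma det_neq0_of_right_inverse A B : A ** B = mid -> det A <> 0.
Proof.
  intros H H0. pose proof (f_equal det H) as E.
  rewrite det_mmul, det_mid, H0, Rmult_0_l in E. lra.
Qed.

Lemma minv_unique A B : A ** B = mid -> minv A = B.
Proof.
  intro H. pose proof (det_neq0_of_right_inverse _ _ H).
  rewrite <- (mmul_mid_r (minv A)), <- H, <- mmul_assoc, minv_mmul by assumption.
  apply mmul_mid_l.
Qed.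

Lemma right_inverse_comm A B : A ** B = mid -> B ** A = mid.
Proof.
  intro H. rewrite <- (minv_unique _ _ H).
  exact (minv_mmul _ (det_neq0_of_right_inverse _ _ H)).
Qed.

Lemma minv_trans A : det A <> 0 -> minv (trans A) = trans (minv A).
Proof. intro H. apply minv_unique. rewrite <- trans_mmul, minv_mmul by assumption. apply trans_mid. Qed.

Definition similarity_invariant (f : Mat -> R) : Prop :=
  forall P Q X, P ** Q = mid -> f (P ** X ** Q) = f X.

Lemma Wtilde_similarity_invariant Psi : similarity_invariant (Wtilde Psi).
Proof.
  intros P Q X HPQ. pose proof (right_inverse_comm _ _ HPQ) as HQP.
  unfold Wtilde. f_equal.
  - rewrite tr_mmulC, <- mmul_assoc, HQP, mmul_mid_l. reflexivity.
  - rewrite !cof_mmul, tr_mmulC, <- mmul_assoc, <- cof_mmul, HQP, cof_mid, mmul_mid_l.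
    reflexivity.
  - rewrite !det_mmul, Rmult_comm, <- Rmult_assoc, <- det_mmul, HQP, det_mid. ring.
Qed.

Definition right_slope (g : R -> R) (a : R) : Prop :=
  forall eps, eps > 0 -> exists s0, s0 > 0 /\
    forall s, 0 < s < s0 -> Rabs (g s - s * a) <= eps * s.

Lemma right_slope_unique g h a b :
  (forall s, 0 < s -> g s = h s) -> right_slope g a -> right_slope h b -> a = b.
Proof.
  intros Egh Ha Hb.
  destruct (Req_dec a b) as [|Hne]; [assumption | exfalso].
  set (d := Rabs (a - b)).
  assert (Hd : 0 < d) by (apply Rabs_pos_lt; lra).
  destruct (Ha (d / 4)) as [s0 [Hs0 Ha']]; [lra|].
  destruct (Hb (d / 4)) as [s1 [Hs1 Hb']]; [lra|].
  set (s := Rmin s0 s1 / 2).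
  assert (Hs : 0 < s < s0 /\ 0 < s < s1).
  { pose proof (Rmin_pos s0 s1 Hs0 Hs1). pose proof (Rmin_l s0 s1).
    pose proof (Rmin_r s0 s1). unfold s; lra. }
  specialize (Ha' s (proj1 Hs)). specialize (Hb' s (proj2 Hs)).
  rewrite Egh in Ha' by lra.
  assert (Hsd : Rabs (s * (a - b)) <= d / 2 * s).
  { replace (s * (a - b)) with ((h s - s * b) + - (h s - s * a)) by ring.
    eapply Rle_trans; [apply Rabs_triang|]. rewrite Rabs_Ropp. lra. }
  rewrite Rabs_mult, Rabs_right in Hsd by lra. fold d in Hsd. nra.
Qed.

Lemma right_slope_plus g h a b :
  right_slope g a -> right_slope h b -> right_slope (fun s => g s + h s) (a + b).
Proof.
  intros Ha Hb eps Heps.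
  destruct (Ha (eps / 2)) as [s0 [Hs0 Ha']]; [lra|].
  destruct (Hb (eps / 2)) as [s1 [Hs1 Hb']]; [lra|].
  exists (Rmin s0 s1). split; [now apply Rmin_pos|].
  intros s Hs. pose proof (Rmin_l s0 s1). pose proof (Rmin_r s0 s1).
  specialize (Ha' s ltac:(lra)). specialize (Hb' s ltac:(lra)).
  replace (g s + h s - s * (a + b)) with ((g s - s * a) + (h s - s * b)) by ring.
  eapply Rle_trans; [apply Rabs_triang|]. lra.
Qed.

Lemma right_slope_quadratic a c : right_slope (fun s => s * a + s * s * c) a.
Proof.
  intros eps Heps. pose proof (Rabs_pos c).
  exists (eps / (Rabs c + 1)). split; [apply Rdiv_lt_0_compat; lra|].
  intros s [Hs Hs'].
  replace (s * a + s * s * c - s * a) with (s * s * c) by ring.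
  rewrite Rabs_mult, Rabs_right by nra.
  apply Rmult_lt_compat_r with (r := Rabs c + 1) in Hs'; [|lra].
  unfold Rdiv in Hs'. rewrite Rmult_assoc, Rinv_l, Rmult_1_r in Hs' by lra. nra.
Qed.

Lemma right_slope_gradient_remainder f X G (H : R -> Mat) B :
  is_gradient f X G -> 0 < B -> (forall s, 0 < s <= 1 -> mnorm (H s) <= s * B) ->
  right_slope (fun s => f (madd X (H s)) - f X - inner G (H s)) 0.
Proof.
  intros HG HB HH eps Heps.
  destruct (HG (eps / B)) as [d [Hd Hd']]; [apply Rdiv_lt_0_compat; lra|].
  exists (Rmin 1 (d / B)). split; [apply Rmin_pos; [lra | apply Rdiv_lt_0_compat; lra]|].
  intros s [Hs Hs']. pose proof (Rmin_l 1 (d / B)). pose proof (Rmin_r 1 (d / B)).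
  assert (Hn : mnorm (H s) <= s * B) by (apply HH; lra).
  assert (HsB : s * B < d).
  { assert (HsdB : s < d / B) by lra.
    apply Rmult_lt_compat_r with (r := B) in HsdB; [|lra].
    unfold Rdiv in HsdB. rewrite Rmult_assoc, Rinv_l, Rmult_1_r in HsdB by lra. lra. }
  rewrite Rmult_0_r, Rminus_0_r.
  eapply Rle_trans; [apply Hd'; lra|].
  replace (eps * s) with (eps / B * (s * B)) by (field; lra).
  apply Rmult_le_compat_l; [apply Rlt_le, Rdiv_lt_0_compat|]; lra.
Qed.

Definition qpath (X Q P : Mat) (s : R) : Mat :=
  madd X (madd (mscal s Q) (mscal (s * s) P)).

Lemma mnorm_qpath_increment_le Q P s : 0 < s <= 1 ->
  mnorm (madd (mscal s Q) (mscal (s * s) P)) <= s * sqrt (2 * inner Q Q + 2 * inner P P).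
Proof.
  intros Hs.
  assert (Hentry : forall q p, (s * q + s * s * p) * (s * q + s * s * p) <=
                                s * s * (2 * q * q + 2 * p * p)).
  { intros q p. pose proof (Rle_0_sqr (q - s * p)). pose proof (Rle_0_sqr p). unfold Rsqr in *.
    assert (s * s <= 1) by nra. nra. }
  unfold mnorm.
  replace (s * sqrt (2 * inner Q Q + 2 * inner P P))
    with (sqrt (s * s * (2 * inner Q Q + 2 * inner P P)))
    by (rewrite sqrt_mult_alt, sqrt_square by nra; reflexivity).
  apply sqrt_le_1_alt.
  pose proof (fun i j => Hentry (Q i j) (P i j)) as T.
  pose proof (T i1 i1). pose proof (T i1 i2). pose proof (T i1 i3).
  pose proof (T i2 i1). pose proof (T i2 i2). pose proof (T i2 i3).
  pose proof (T i3 i1). pose proof (T i3 i2). pose proof (T i3 i3).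
  unfold inner, tr, mmul, trans, madd, mscal, sum3. lra.
Qed.

Lemma right_slope_gradient f X G Q P :
  is_gradient f X G -> right_slope (fun s => f (qpath X Q P s) - f X) (inner G Q).
Proof.
  intro HG.
  set (B := sqrt (2 * inner Q Q + 2 * inner P P) + 1).
  assert (HB : 0 < B) by (pose proof (sqrt_pos (2 * inner Q Q + 2 * inner P P)); unfold B; lra).
  pose proof (right_slope_plus _ _ _ _
    (right_slope_gradient_remainder f X G (fun s => madd (mscal s Q) (mscal (s * s) P)) B HG HB
       ltac:(intros s Hs; pose proof (mnorm_qpath_increment_le Q P s Hs); unfold B; nra))
    (right_slope_quadratic (inner G Q) (inner G P))) as Hsum.
  rewrite Rplus_0_l in Hsum.
  replace (fun s => f (qpath X Q P s) - f X) with
    (fun s => f (madd X (madd (mscal s Q) (mscal (s * s) P))) - f X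
              - inner G (madd (mscal s Q) (mscal (s * s) P)) + (s * inner G Q + s * s * inner G P));
    [exact Hsum|].
  extensionality s. unfold qpath.
  replace (inner G (madd (mscal s Q) (mscal (s * s) P))) with (s * inner G Q + s * s * inner G P)
    by (unfold inner, tr, mmul, trans, madd, mscal, sum3; ring).
  ring.
Qed.

Lemma gradient_inner_eq f X G Q P f' X' G' Q' P' :
  is_gradient f X G -> is_gradient f' X' G' ->
  (forall s, 0 < s -> f (qpath X Q P s) - f X = f' (qpath X' Q' P' s) - f' X') ->
  inner G Q = inner G' Q'.
Proof.
  intros HG HG' E.
  exact (right_slope_unique _ _ _ _ E (right_slope_gradient f X G Q P HG)
           (right_slope_gradient f' X' G' Q' P' HG')).
Qed.

Definition mat9 (a b c d e f g h k : R) : Mat := fun i j =>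
  match i, j with
  | i1, i1 => a | i1, i2 => b | i1, i3 => c
  | i2, i1 => d | i2, i2 => e | i2, i3 => f
  | i3, i1 => g | i3, i2 => h | i3, i3 => k
  end.

Lemma inner_inj A B : (forall E, inner A E = inner B E) -> A = B.
Proof.
  intro H.
  pose proof (H (mat9 1 0 0 0 0 0 0 0 0)). pose proof (H (mat9 0 1 0 0 0 0 0 0 0)).
  pose proof (H (mat9 0 0 1 0 0 0 0 0 0)). pose proof (H (mat9 0 0 0 1 0 0 0 0 0)).
  pose proof (H (mat9 0 0 0 0 1 0 0 0 0)). pose proof (H (mat9 0 0 0 0 0 1 0 0 0)).
  pose proof (H (mat9 0 0 0 0 0 0 1 0 0)). pose proof (H (mat9 0 0 0 0 0 0 0 1 0)).
  pose proof (H (mat9 0 0 0 0 0 0 0 0 1)).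
  unfold inner, tr, mmul, trans, mat9, sum3 in *; simpl in *.
  apply Mat_ext; intros [] []; lra.
Qed.

(* The eight nilpotents below span the trace-free matrices; the commutator
   [X G^T] is orthogonal to all of them and is itself trace-free. *)
Lemma commute_of_nilpotent_orth G X :
  (forall N, N ** N = mzero -> inner G (madd (N ** X) (mopp (X ** N))) = 0) ->
  X ** trans G = trans G ** X.
Proof.
  intro H.
  pose proof (H (mat9 0 1 0 0 0 0 0 0 0) ltac:(mat_ring)).
  pose proof (H (mat9 0 0 1 0 0 0 0 0 0) ltac:(mat_ring)).
  pose proof (H (mat9 0 0 0 1 0 0 0 0 0) ltac:(mat_ring)).
  pose proof (H (mat9 0 0 0 0 0 1 0 0 0) ltac:(mat_ring)).
  pose proof (H (mat9 0 0 0 0 0 0 1 0 0) ltac:(mat_ring)).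
  pose proof (H (mat9 0 0 0 0 0 0 0 1 0) ltac:(mat_ring)).
  pose proof (H (mat9 1 (-1) 0 1 (-1) 0 0 0 0) ltac:(mat_ring)).
  pose proof (H (mat9 0 0 0 0 1 (-1) 0 1 (-1)) ltac:(mat_ring)).
  unfold inner, tr, mmul, madd, mopp, trans, mat9, sum3 in *; simpl in *.
  apply Mat_ext; intros [] []; lra.
Qed.

Lemma gradient_commute f X G :
  similarity_invariant f -> is_gradient f X G -> X ** trans G = trans G ** X.
Proof.
  intros Hf HG. apply commute_of_nilpotent_orth. intros N HN.
  (* (1 + sN)^-1 = 1 - sN, so f is constant along the quadratic path (1 + sN) X (1 - sN). *)
  rewrite (gradient_inner_eq f X G _ (mopp (N ** X ** N)) f X G mzero mzero HG HG).
  - unfold inner, tr, mmul, trans, mzero, sum3; ring.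
  - intros s _.
    replace (qpath X mzero mzero s) with X by (unfold qpath; mat_ring).
    replace (qpath X (madd (N ** X) (mopp (X ** N))) (mopp (N ** X ** N)) s)
      with (madd mid (mscal s N) ** X ** madd mid (mscal (- s) N)) by (unfold qpath; mat_ring).
    rewrite Hf; [reflexivity|].
    replace (madd mid (mscal s N) ** madd mid (mscal (- s) N))
      with (madd mid (mscal (- (s * s)) (N ** N))) by mat_ring.
    rewrite HN. mat_ring.
Qed.

Lemma gradient_cauchy_green f Fe Ge P Q Gt :
  similarity_invariant f -> P ** Q = mid ->
  is_gradient (fun F => f (trans F ** F)) Fe Ge ->
  is_gradient f (trans P ** (trans Fe ** Fe) ** trans Q) Gt ->
  Ge = Fe ** madd (P ** Gt ** Q) (trans (P ** Gt ** Q)).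
Proof.
  intros Hf HPQ HGe HGt.
  assert (HPQt : trans P ** trans Q = mid).
  { rewrite <- trans_mmul, (right_inverse_comm _ _ HPQ). apply trans_mid. }
  apply inner_inj. intro E. symmetry.
  transitivity (inner Gt (trans P ** madd (trans Fe ** E) (trans E ** Fe) ** trans Q)).
  { unfold inner, tr, mmul, trans, madd, sum3; ring. }
  apply (gradient_inner_eq _ _ _ _ (trans P ** (trans E ** E) ** trans Q) _ _ _ E mzero HGt HGe).
  intros s _.
  replace (qpath (trans P ** (trans Fe ** Fe) ** trans Q)
             (trans P ** madd (trans Fe ** E) (trans E ** Fe) ** trans Q)
             (trans P ** (trans E ** E) ** trans Q) s)
    with (trans P ** (trans (qpath Fe E mzero s) ** qpath Fe E mzero s) ** trans Q)
    by (unfold qpath; mat_ring).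
  rewrite !Hf by exact HPQt. reflexivity.
Qed.

Section OrthogonalConjugation.

Variable Q : Mat.
Hypothesis Q_orth_l : trans Q ** Q = mid.

Let Q_orth_r : Q ** trans Q = mid := right_inverse_comm _ _ Q_orth_l.

Lemma tr_orth_conj S : tr (trans Q ** S ** Q) = tr S.
Proof. rewrite tr_mmulC, <- mmul_assoc, Q_orth_r, mmul_mid_l. reflexivity. Qed.

Lemma dev3_orth_conj S : dev3 (trans Q ** S ** Q) = trans Q ** dev3 S ** Q.
Proof.
  unfold dev3. rewrite tr_orth_conj.
  replace (trans Q ** madd S (mopp (mscal (tr S / 3) mid)) ** Q)
    with (madd (trans Q ** S ** Q) (mopp (mscal (tr S / 3) (trans Q ** Q)))) by mat_ring.
  rewrite Q_orth_l. reflexivity.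
Qed.

Lemma mnorm_orth_conj A : mnorm (trans Q ** A ** Q) = mnorm A.
Proof.
  unfold mnorm, inner. f_equal.
  rewrite !trans_mmul, trans_trans, !mmul_assoc, (mmul_cancel_l _ _ _ Q_orth_r),
    tr_mmulC, !mmul_assoc, Q_orth_r, mmul_mid_r.
  reflexivity.
Qed.

Lemma orth_conjK Y : Q ** (trans Q ** Y ** Q) ** trans Q = Y.
Proof. rewrite !mmul_assoc, (mmul_cancel_l _ _ _ Q_orth_r), Q_orth_r. apply mmul_mid_r. Qed.

Lemma orth_conjK' Y : trans Q ** (Q ** Y ** trans Q) ** Q = Y.
Proof. rewrite !mmul_assoc, (mmul_cancel_l _ _ _ Q_orth_l), Q_orth_l. apply mmul_mid_r. Qed.

Lemma Ncone_orth_conj r S Y :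
  Ncone r (trans Q ** S ** Q) (trans Q ** Y ** Q) <-> Ncone r S Y.
Proof.
  unfold Ncone. rewrite dev3_orth_conj, mnorm_orth_conj.
  assert (Hscal : forall c D, trans Q ** mscal c D ** Q = mscal c (trans Q ** D ** Q))
    by (intros; mat_ring).
  assert (Hzero : trans Q ** mzero ** Q = mzero) by mat_ring.
  split; intros [[Hn HY] | [Hn [l [Hl HY]]]].
  - left. split; [exact Hn|]. rewrite <- (orth_conjK Y), HY. mat_ring.
  - right. split; [exact Hn|]. exists l. split; [exact Hl|].
    rewrite <- (orth_conjK Y), HY, <- Hscal, orth_conjK. reflexivity.
  - left. split; [exact Hn|]. rewrite HY. exact Hzero.
  - right. split; [exact Hn|]. exists l. split; [exact Hl|]. rewrite HY. apply Hscal.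
Qed.

Lemma negconj_orth_conj r M N S X :
  negconj (M ** trans Q) (Q ** N) (Ncone r S) X <->
  negconj M N (Ncone r (trans Q ** S ** Q)) X.
Proof.
  unfold negconj. split; intros [Y [HY HX]].
  - exists (trans Q ** Y ** Q). split; [now apply Ncone_orth_conj|].
    rewrite HX. f_equal. rewrite !mmul_assoc. reflexivity.
  - exists (Q ** Y ** trans Q). split.
    + apply Ncone_orth_conj. rewrite orth_conjK'. exact HY.
    + rewrite HX, <- (orth_conjK' Y) at 1. f_equal. rewrite !mmul_assoc. reflexivity.
Qed.

End OrthogonalConjugation.

Definition polar_rotation (Fp Up : Mat) : Mat := Fp ** minv Up.

Section PolarDecomposition.

Variables Fp Up : Mat.
Hypothesis Fp_invertible : det Fp <> 0.
Hypothesis Up_sqrt : is_sqrt_spd Up (trans Fp ** Fp).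

Let Rp := polar_rotation Fp Up.

Lemma det_sqrt_neq0 : det Up <> 0.
Proof.
  destruct Up_sqrt as [_ [_ HUU]]. intro H0.
  pose proof (f_equal det HUU) as E.
  rewrite !det_mmul, det_trans, H0 in E. apply Fp_invertible. nra.
Qed.

Lemma trans_minv_sqrt : trans (minv Up) = minv Up.
Proof.
  destruct Up_sqrt as [HU _].
  rewrite <- minv_trans by exact det_sqrt_neq0. rewrite HU. reflexivity.
Qed.

Lemma polar_rotation_orth : trans Rp ** Rp = mid.
Proof.
  destruct Up_sqrt as [_ [_ HUU]]. unfold Rp, polar_rotation.
  rewrite trans_mmul, trans_minv_sqrt, !mmul_assoc, <- (mmul_assoc (trans Fp)), <- HUU,
    !mmul_assoc, (mmul_cancel_l _ _ _ (minv_mmul _ det_sqrt_neq0)).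
  exact (mmul_minv _ det_sqrt_neq0).
Qed.

Lemma minv_polar : minv Fp = minv Up ** trans Rp.
Proof.
  apply minv_unique. rewrite <- mmul_assoc. exact (right_inverse_comm _ _ polar_rotation_orth).
Qed.

Lemma minv_right_cauchy_green : minv (trans Fp ** Fp) = minv Up ** minv Up.
Proof.
  apply minv_unique. destruct Up_sqrt as [_ [_ HUU]].
  rewrite <- HUU, !mmul_assoc, (mmul_cancel_l _ _ _ (mmul_minv _ det_sqrt_neq0)).
  exact (mmul_minv _ det_sqrt_neq0).
Qed.

Lemma Sigma_e_polar f F Ge Gt :
  similarity_invariant f ->
  is_gradient (fun Fe => f (trans Fe ** Fe)) (F ** minv Fp) Ge ->
  is_gradient f (trans F ** F ** minv (trans Fp ** Fp)) Gt ->
  trans Rp ** Sigma_e (F ** minv Fp) Ge ** Rp = Sigma_ring Up (trans F ** F) Gt.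
Proof.
  intros Hf HGe HGt.
  destruct Up_sqrt as [HU _].
  pose proof polar_rotation_orth as HR.
  pose proof (minv_mmul _ det_sqrt_neq0) as HUiU.
  assert (HFp : Fp = Rp ** Up).
  { unfold Rp, polar_rotation. rewrite mmul_assoc, HUiU. symmetry. apply mmul_mid_r. }
  assert (HX : trans F ** F ** minv (trans Fp ** Fp) = trans F ** F ** minv Up ** minv Up)
    by (rewrite minv_right_cauchy_green; symmetry; apply mmul_assoc).
  rewrite HX in HGt.
  pose proof (gradient_commute f _ _ Hf HGt) as Hcomm.
  rewrite minv_polar in HGe |- *.
  assert (HGe' : Ge = F ** (minv Up ** trans Rp) **
     madd (Rp ** Up ** Gt ** (minv Up ** trans Rp)) (trans (Rp ** Up ** Gt ** (minv Up ** trans Rp)))).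
  { apply (gradient_cauchy_green f); [exact Hf| |exact HGe|].
    - rewrite <- HFp, <- minv_polar. exact (mmul_minv _ Fp_invertible).
    - replace (trans (Rp ** Up) ** (trans (F ** (minv Up ** trans Rp)) ** (F ** (minv Up ** trans Rp)))
         ** trans (minv Up ** trans Rp)) with (trans F ** F ** minv Up ** minv Up); [exact HGt|].
      rewrite !trans_mmul, !trans_trans, trans_minv_sqrt, HU, !mmul_assoc,
        !(mmul_cancel_l _ _ _ HR), (mmul_cancel_l _ _ _ (mmul_minv _ det_sqrt_neq0)).
      reflexivity. }
  transitivity (minv Up ** madd (trans F ** F ** Gt) (trans Gt ** (trans F ** F)) ** minv Up).
  - unfold Sigma_e. rewrite HGe'.
    rewrite !trans_mmul, !trans_trans, trans_minv_sqrt, HU, !mmul_madd_l, !mmul_madd_r, !mmul_assoc,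
      !(mmul_cancel_l _ _ _ HR), !HR, !mmul_mid_r, (mmul_cancel_l _ _ _ HUiU).
    f_equal. f_equal.
    rewrite <- !mmul_assoc, Hcomm, !mmul_assoc, HUiU, mmul_mid_r. reflexivity.
  - apply Mat_ext; intros [] []; unfold Sigma_ring, msym, mscal, madd, mmul, trans, sum3; simpl; field.
Qed.

Lemma negconj_Ncone_polar f r F Ge Gt X :
  similarity_invariant f ->
  is_gradient (fun Fe => f (trans Fe ** Fe)) (F ** minv Fp) Ge ->
  is_gradient f (trans F ** F ** minv (trans Fp ** Fp)) Gt ->
  negconj (minv Fp) (trans (minv Fp)) (Ncone r (Sigma_e (F ** minv Fp) Ge)) X <->
  negconj (minv Up) (minv Up) (Ncone r (Sigma_ring Up (trans F ** F) Gt)) X.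
Proof.
  intros Hf HGe HGt.
  rewrite <- (Sigma_e_polar f F Ge Gt Hf HGe HGt), <- (negconj_orth_conj _ polar_rotation_orth),
    minv_polar, trans_mmul, trans_trans, trans_minv_sqrt.
  reflexivity.
Qed.

End PolarDecomposition.

Lemma negconj_minv M N A X : det M <> 0 -> det N <> 0 ->
  negconj (minv M) (minv N) A X <-> A (mopp (M ** X ** N)).
Proof.
  intros HM HN. unfold negconj. split.
  - intros [Y [HY ->]].
    replace (mopp (M ** mopp (minv M ** (Y ** minv N)) ** N)) with Y; [exact HY|].
    rewrite mmul_mopp_r, mmul_mopp_l, mopp_mopp, !mmul_assoc, (mmul_cancel_l _ _ _ (mmul_minv _ HM)),
      minv_mmul, mmul_mid_r by exact HN.
    reflexivity.
  - intro HA. exists (mopp (M ** X ** N)). split; [exact HA|].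
    rewrite mmul_mopp_l, mmul_mopp_r, mopp_mopp, !mmul_assoc, (mmul_cancel_l _ _ _ (minv_mmul _ HM)),
      mmul_minv, mmul_mid_r by exact HN.
    reflexivity.
Qed.

Theorem mainTheorem9 (Psi : R -> R -> R -> R) (HPsi : C1_3 Psi) (r : R) (hr : 0 < r) :
  (forall (F Fp Up Ge Gt : Mat),
     GLplus F -> GLplus Fp ->
     is_sqrt_spd Up (mmul (trans Fp) Fp) ->
     is_gradient (Wfun Psi) (mmul F (minv Fp)) Ge ->
     is_gradient (Wtilde Psi)
       (mmul (mmul (trans F) F) (minv (mmul (trans Fp) Fp))) Gt ->
     forall X : Mat,
       negconj (minv Fp) (trans (minv Fp))
         (Ncone r (Sigma_e (mmul F (minv Fp)) Ge)) X
       <->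
       negconj (minv Up) (minv Up)
         (Ncone r (Sigma_ring Up (mmul (trans F) F) Gt)) X)
  /\
  (forall (F : Mat) (Fp : R -> Mat) (t : R) (Up Ge Gt D : Mat),
     GLplus F -> (forall s, GLplus (Fp s)) ->
     (forall s i j, derivable_pt (fun u => Fp u i j) s) ->
     (forall i j, derivable_pt_lim
        (fun u => minv (mmul (trans (Fp u)) (Fp u)) i j) t (D i j)) ->
     is_sqrt_spd Up (mmul (trans (Fp t)) (Fp t)) ->
     is_gradient (Wfun Psi) (mmul F (minv (Fp t))) Ge ->
     is_gradient (Wtilde Psi)
       (mmul (mmul (trans F) F) (minv (mmul (trans (Fp t)) (Fp t)))) Gt ->
     (negconj (minv (Fp t)) (trans (minv (Fp t)))
        (Ncone r (Sigma_e (mmul F (minv (Fp t))) Ge)) D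
      <->
      Ncone r (Sigma_ring Up (mmul (trans F) F) Gt) (mopp (mmul Up (mmul D Up))))).
Proof.
  split.
  - intros F Fp Up Ge Gt _ HFp HUp HGe HGt X.
    exact (negconj_Ncone_polar Fp Up ltac:(unfold GLplus in HFp; lra) HUp
             (Wtilde Psi) r F Ge Gt X (Wtilde_similarity_invariant Psi) HGe HGt).
  - intros F Fp t Up Ge Gt D _ HFp _ _ HUp HGe HGt.
    assert (HFt : det (Fp t) <> 0) by (specialize (HFp t); unfold GLplus in HFp; lra).
    rewrite (negconj_Ncone_polar (Fp t) Up HFt HUp (Wtilde Psi) r F Ge Gt D
               (Wtilde_similarity_invariant Psi) HGe HGt),
      negconj_minv by exact (det_sqrt_neq0 _ _ HFt HUp).
    rewrite mmul_assoc. reflexivity.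
Qed.
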